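(* Suppose that $(\tilde{u},\tilde{v})\in\mathbb{R}^2$ and $c>0$, and set \[ u_c = \frac{\tilde{u}}{c},\qquad v_c = \frac{2\ln c+\tilde{v}}{c}. \] Then as $c\to+\infty$ the catenoids $\mathfrak{C}_c$ (parametrized by $X_c$) satisfy \[ \lim_{c\to+\infty} X_c(u_c+iv_c) = \left(-\frac{1}{2\lambda_1}\cos\tilde{u}\,e^{\tilde{v}},\; -\frac{1}{2\lambda_2}\sin\tilde{u}\,e^{\tilde{v}},\; 0\right). \]
   Context: Setting: $\widetilde{E(2)}$ is $\mathbb{R}^3$ with the group law $(x_1,y_1,z_1)*(x_2,y_2,z_2)=(x_1+x_2\cos z_1-y_2\sin z_1,\ y_1+x_2\sin z_1+y_2\cos z_1,\ z_1+z_2)$ and the left-invariant metric $g(\lambda_1,\lambda_2)=\lambda_1^2(\cos z\,dx+\sin z\,dy)^2+\lambda_2^2(-\sin z\,dx+\cos z\,dy)^2+\frac{1}{\lambda_1^2\lambda_2^2}dz^2$, where either $\lambda_1>\lambda_2>0$ or $\lambda_1=\lambda_2=1$. Write coordinates as $(x_1,x_2,x_3)$. Construction of the catenoid $\mathfrak{C}_c$: For $c>0$ and a real $\theta$, put $\theta_c^+=\pi$ if $c>\sqrt2\lambda_1$ and $\theta_c^+=\arccos(1-c^2/\lambda_1^2)$ if $0<c\le\sqrt2\lambda_1$, and take $\theta\in(-\theta_c^+,\theta_c^+)$. Let $\varphi$ solve $\varphi'(u)=\sqrt{c^2+2\cos\theta\, B-D^2B^2}$, $\varphi(0)=0$, where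 $B=\lambda_1^2\cos^2\varphi(u)+\lambda_2^2\sin^2\varphi(u)$ and $D=\sin\theta/c$; let $f$ solve $f'(u)=DB$, $f(0)=0$; let $A=f(u)+cv$; let $G(u)=\int_0^u\frac{c-\varphi'(s)}{B}\,ds$; let $U>0$ be such that $\varphi(U)=\pi$, and let $H(c,\theta)=Df(U)+cG(U)$. It is known that for each $c>0$ there is a unique $\widetilde{\theta_c}\in(0,\pi/2)\cap(0,\theta_c^+)$ with $H(c,\widetilde{\theta_c})=0$, and that $\widetilde{\theta_c}\to\pi/2$ as $c\to+\infty$. The catenoid $\mathfrak{C}_c$ is the image of the conformal minimal immersion $X_c=(x_1,x_2,x_3):\mathbb{C}\to\widetilde{E(2)}$, $z=u+iv$, obtained with $\theta=\widetilde{\theta_c}$ (all of $\varphi,f,B,D,A,G,U$ then depend on $c$), given by $x_3(u+iv)=-\lambda_1\lambda_2Dv+\lambda_1\lambda_2G(u)$, $x_1=-\frac{1}{(c^2+\lambda_1^2\lambda_2^2D^2)B}\Big[\frac{1}{\lambda_1}f'\cos\varphi\,M_1-\frac{1}{\lambda_1}(c-\varphi')\sin\varphi\,M_2-\frac{1}{\lambda_2}(c-\varphi')\cos\varphi\,M_3-\frac{1}{\lambda_2}f'\sin\varphi\,M_4\Big]$, $x_2=-\frac{1}{(c^2+\lambda_1^2\lambda_2^2D^2)B}\Big[\frac{1}{\lambda_1}f'\cos\varphi\,M_4-\frac{1}{\lambda_1}(c-\varphi')\sin\varphi\,M_3+\frac{1}{\lambda_2}(c-\varphi')\cos\varphi\,M_2+\frac{1}{\lambda_2}f'\sin\varphi\,M_1\Big]$,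 where $M_1=c\cos x_3\cosh A-\lambda_1\lambda_2D\sin x_3\sinh A$, $M_2=c\cos x_3\sinh A-\lambda_1\lambda_2D\sin x_3\cosh A$, $M_3=c\sin x_3\sinh A+\lambda_1\lambda_2D\cos x_3\cosh A$, $M_4=c\sin x_3\cosh A+\lambda_1\lambda_2D\cos x_3\sinh A$, and $\varphi,\varphi',f'$ are evaluated at $u$. Its Gauss map is $g(u+iv)=e^{f(u)+cv}e^{i\varphi(u)}$. *)

From Stdlib Require Import Reals Lra.
From Coquelicot Require Import Coquelicot.
Open Scope R_scope.

Section Catenoid.
Variables (l1 l2 : R).

Definition Bf (ph : R) : R := l1 ^ 2 * (cos ph) ^ 2 + l2 ^ 2 * (sin ph) ^ 2.

Definition Dc (c th : R) : R := sin th / c.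

Definition theta_plus (c : R) : R :=
  if Rlt_dec (sqrt 2 * l1) c then PI else acos (1 - c ^ 2 / l1 ^ 2).

Definition phi_rhs (c th ph : R) : R :=
  sqrt (c ^ 2 + 2 * cos th * Bf ph - (Dc c th) ^ 2 * (Bf ph) ^ 2).

Definition Gf (c th : R) (phi : R -> R) (u : R) : R :=
  RInt (fun s => (c - phi_rhs c th (phi s)) / Bf (phi s)) 0 u.

Definition Hf (c th : R) (phi f : R -> R) (U : R) : R :=
  Dc c th * f U + c * Gf c th phi U.

(* The data (theta, phi, f, U) defining the catenoid C_c:
   theta = theta~_c is characterized as the (known to be unique) element of
   (0, pi/2) /\ (0, theta_c^+) with H(c,theta) = 0. *)
Definition catenoid_data (c th : R) (phi f : R -> R) (U : R) : Prop :=
  0 < th /\ th < PI / 2 /\ th < theta_plus c /\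
  (forall u, is_derive phi u (phi_rhs c th (phi u))) /\ phi 0 = 0 /\
  (forall u, is_derive f u (Dc c th * Bf (phi u))) /\ f 0 = 0 /\
  0 < U /\ phi U = PI /\
  Hf c th phi f U = 0.

(* The immersion X_c = (x1, x2, x3) at z = u + i v *)
Definition X3 (c th : R) (phi : R -> R) (u v : R) : R :=
  - l1 * l2 * Dc c th * v + l1 * l2 * Gf c th phi u.

Definition Af (c : R) (f : R -> R) (u v : R) : R := f u + c * v.

Definition M1 c th phi f u v :=
  let x3 := X3 c th phi u v in let A := Af c f u v in
  c * cos x3 * cosh A - l1 * l2 * Dc c th * sin x3 * sinh A.
Definition M2 c th phi f u v :=
  let x3 := X3 c th phi u v in let A := Af c f u v in
  c * cos x3 * sinh A - l1 * l2 * Dc c th * sin x3 * cosh A.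
Definition M3 c th phi f u v :=
  let x3 := X3 c th phi u v in let A := Af c f u v in
  c * sin x3 * sinh A + l1 * l2 * Dc c th * cos x3 * cosh A.
Definition M4 c th phi f u v :=
  let x3 := X3 c th phi u v in let A := Af c f u v in
  c * sin x3 * cosh A + l1 * l2 * Dc c th * cos x3 * sinh A.

Definition X1 (c th : R) (phi f : R -> R) (u v : R) : R :=
  let ph := phi u in let B := Bf ph in let D := Dc c th in
  let dph := phi_rhs c th ph in let df := D * B in
  - / ((c ^ 2 + l1 ^ 2 * l2 ^ 2 * D ^ 2) * B) *
    ( / l1 * df * cos ph * M1 c th phi f u v
    - / l1 * (c - dph) * sin ph * M2 c th phi f u v
    - / l2 * (c - dph) * cos ph * M3 c th phi f u v
    - / l2 * df * sin ph * M4 c th phi f u v).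

Definition X2 (c th : R) (phi f : R -> R) (u v : R) : R :=
  let ph := phi u in let B := Bf ph in let D := Dc c th in
  let dph := phi_rhs c th ph in let df := D * B in
  - / ((c ^ 2 + l1 ^ 2 * l2 ^ 2 * D ^ 2) * B) *
    ( / l1 * df * cos ph * M4 c th phi f u v
    - / l1 * (c - dph) * sin ph * M3 c th phi f u v
    + / l2 * (c - dph) * cos ph * M2 c th phi f u v
    + / l2 * df * sin ph * M1 c th phi f u v).

End Catenoid.

(* The normalisation H(c, θ_c) = 0 forces cos θ_c = O(1/c²): otherwise
   H'(u) = D²B + c (c - φ')/B would be negative everywhere, giving
   H(U) < H(0) = 0.  Hence sin θ_c → 1, φ' = c + O(1/c) and c (c - φ') → 0,
   and integrating over [0, ũ/c] gives φ(u_c) → ũ, f(u_c) → 0, G(u_c) → 0 and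
   x3 → 0.  Since A = (f(u_c) + ṽ) + 2 ln c, cosh A and sinh A are c² times
   bounded quantities, and the factor c² cancels the denominator of x1 and x2;
   what remains is continuous in (sin θ, φ(u_c), x3, c (c - φ'), f(u_c) + ṽ, 1/c),
   whose limit is (1, ũ, 0, 0, ṽ, 0). *)

From Stdlib Require Import Reals Lra Psatz.
From Coquelicot Require Import Coquelicot.
Open Scope R_scope.

Section FiniteLimits.
Variable x : Rbar.

Lemma is_lim_mult' (f g : R -> R) (a b : R) :
  is_lim f x a -> is_lim g x b -> is_lim (fun y => f y * g y) x (a * b).
Proof. intros hf hg; exact (is_lim_mult f g x a b hf hg I). Qed.

Lemma is_lim_opp' (f : R -> R) (a : R) : is_lim f x a -> is_lim (fun y => - f y) x (- a).
Proof. exact (is_lim_opp f x a). Qed.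

Lemma is_lim_inv' (f : R -> R) (a : R) :
  is_lim f x a -> a <> 0 -> is_lim (fun y => / f y) x (/ a).
Proof. intros hf ha; apply (is_lim_inv f x a hf); congruence. Qed.

Lemma is_lim_pow' (f : R -> R) (a : R) (n : nat) :
  is_lim f x a -> is_lim (fun y => f y ^ n) x (a ^ n).
Proof.
  intros hf; induction n as [| n IH]; [apply is_lim_const | apply (is_lim_mult' f); auto].
Qed.

Lemma is_lim_comp_cont (h f : R -> R) (a : R) :
  (forall y, continuous h y) -> is_lim f x a -> is_lim (fun y => h (f y)) x (h a).
Proof. intros hh hf; exact (is_lim_comp_continuous f h x a hf (hh a)). Qed.

Lemma is_lim_Finite_eq (f : R -> R) (a b : R) : is_lim f x a -> a = b -> is_lim f x b.
Proof. intros hf <-; exact hf. Qed.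

End FiniteLimits.

Ltac is_lim_rules :=
  repeat match goal with
  | |- is_lim _ _ _ =>
      first [ eassumption | apply is_lim_const | apply is_lim_plus' | apply is_lim_minus'
            | apply is_lim_mult' | apply is_lim_opp' | apply is_lim_pow'
            | apply (is_lim_comp_cont _ cos); [apply continuous_cos |]
            | apply (is_lim_comp_cont _ sin); [apply continuous_sin |]
            | apply (is_lim_comp_cont _ exp); [apply continuous_exp |]
            | apply is_lim_inv' ]
  end.

Lemma is_lim_inv_p_infty : is_lim (fun c => / c) p_infty 0.
Proof. exact (is_lim_inv (fun c => c) p_infty p_infty (is_lim_id _) ltac:(discriminate)). Qed.

Lemma is_lim_p_infty_of_Rabs_le_div (g : R -> R) l K :
  (forall c, 1 <= c -> Rabs (g c - l) <= K / c) -> is_lim g p_infty l.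
Proof.
  intros hg.
  assert (hK : is_lim (fun c => K * / c) p_infty 0).
  { apply is_lim_Finite_eq with (K * 0); [| ring].
    apply is_lim_mult'; [apply is_lim_const | exact is_lim_inv_p_infty]. }
  apply (is_lim_le_le_loc (fun c => l - K * / c) (fun c => l + K * / c)).
  - exists 1; intros c hc; specialize (hg c ltac:(lra)).
    apply Rabs_le_between in hg; unfold Rdiv in hg; lra.
  - apply is_lim_Finite_eq with (l - 0); [| ring].
    apply is_lim_minus'; [apply is_lim_const | exact hK].
  - apply is_lim_Finite_eq with (l + 0); [| ring].
    apply is_lim_plus'; [apply is_lim_const | exact hK].
Qed.

Lemma Rabs_sqrt_sqr_plus_sub c e : 0 < c -> c * Rabs (sqrt (c ^ 2 + e) - c) <= Rabs e.
Proof.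
  intros hc.
  destruct (Rle_or_lt 0 (c ^ 2 + e)) as [he | he].
  - assert (hr := sqrt_sqrt _ he); assert (hr0 := sqrt_pos (c ^ 2 + e)).
    set (r := sqrt (c ^ 2 + e)) in *.
    replace e with ((r - c) * (r + c)) by nra.
    rewrite Rabs_mult, (Rabs_pos_eq (r + c)) by lra.
    assert (hrc := Rabs_pos (r - c)); nra.
  - rewrite sqrt_neg_0, Rabs_left, Rabs_left by nra; nra.
Qed.

Lemma ln_lt_id x : 0 < x -> ln x < x.
Proof.
  intros hx; rewrite <- (exp_ln x) at 2 by exact hx.
  assert (h := exp_ineq1_le (ln x)); lra.
Qed.

Lemma Rabs_sub_at_div_le (F dF : R -> R) K c x :
  1 <= c -> 0 <= K -> (forall y, is_derive F y (dF y)) -> (forall y, Rabs (dF y) <= K / c) ->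
  Rabs (F (x / c) - F 0) <= K * Rabs x / c.
Proof.
  intros hc hK hF hdF.
  eapply Rle_trans.
  { apply (bounded_variation F dF); intros; split; [apply hF | apply hdF]. }
  rewrite Rminus_0_r; unfold Rdiv; rewrite Rabs_mult, Rabs_inv, (Rabs_pos_eq c) by lra.
  assert (hx := Rabs_pos x); assert (hi : 0 < / c <= 1).
  { split; [apply Rinv_0_lt_compat; lra | rewrite <- Rinv_1; apply Rinv_le_contravar; lra]. }
  assert (0 <= K * Rabs x * / c) by (apply Rmult_le_pos; [nra | lra]).
  nra.
Qed.

Lemma Rabs_Dc_le c th : 0 < c -> Rabs (Dc c th) <= / c.
Proof.
  intros hc; unfold Dc, Rdiv; rewrite Rabs_mult, Rabs_inv, (Rabs_pos_eq c) by lra.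
  assert (h := SIN_bound th); assert (Rabs (sin th) <= 1) by (apply Rabs_le; lra).
  assert (0 < / c) by (apply Rinv_0_lt_compat; lra); nra.
Qed.

Lemma Dc_sqr_le c th : 0 < c -> c ^ 2 * Dc c th ^ 2 <= 1.
Proof.
  intros hc; unfold Dc.
  replace (c ^ 2 * (sin th / c) ^ 2) with (sin th ^ 2) by (field; lra).
  assert (h := sin2_cos2 th); unfold Rsqr in h; nra.
Qed.

Lemma Hf_derivative_lt_0 c D B L k : 1 <= c -> c ^ 2 * D ^ 2 <= 1 -> 0 < B <= L ->
  3 * L + L ^ 3 < 2 * k * c ^ 2 ->
  D * (D * B) + c * ((c - sqrt (c ^ 2 + 2 * k * B - D ^ 2 * B ^ 2)) / B) < 0.
Proof.
  intros hc hD hB hk.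
  set (a := c ^ 2 + 2 * k * B - D ^ 2 * B ^ 2); set (m := c ^ 2 + D ^ 2 * B ^ 2).
  assert (hD2 : 0 <= D ^ 2) by apply pow2_ge_0.
  assert (hc2 : 1 <= c ^ 2) by nra.
  assert (hD21 : D ^ 2 <= 1) by nra.
  assert (hB3 : 0 <= B ^ 3 <= L ^ 3) by (split; [apply pow_le | apply pow_incr]; lra).
  assert (hgap : c ^ 2 * a - m ^ 2
                 = B * (2 * k * c ^ 2 - 3 * (c ^ 2 * D ^ 2) * B - (D ^ 2) ^ 2 * B ^ 3))
    by (unfold a, m; ring).
  assert (hpos : 0 < c ^ 2 * a - m ^ 2).
  { rewrite hgap; apply Rmult_lt_0_compat; [lra |].
    assert (3 * (c ^ 2 * D ^ 2) * B <= 3 * L) by nra.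
    assert ((D ^ 2) ^ 2 <= 1) by nra.
    assert ((D ^ 2) ^ 2 * B ^ 3 <= L ^ 3) by nra.
    lra. }
  assert (hm : 0 < m) by (unfold m; nra).
  assert (hsqrt : m < c * sqrt a).
  { rewrite <- (sqrt_pow2 m), <- (sqrt_pow2 c), <- sqrt_mult by nra.
    apply sqrt_lt_1; nra. }
  apply (Rmult_lt_reg_r B); [lra |].
  replace ((D * (D * B) + c * ((c - sqrt a) / B)) * B) with (m - c * sqrt a)
    by (unfold m; field; lra).
  lra.
Qed.

(* With [ic = / c]: [cosh (q + 2 ln c) = c^2 cosh_scaled q ic], and similarly for sinh. *)
Definition cosh_scaled q ic := (exp q + exp (- q) * ic ^ 4) / 2.
Definition sinh_scaled q ic := (exp q - exp (- q) * ic ^ 4) / 2.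

Lemma cosh_sinh_scaled c A q : 0 < c -> A = q + 2 * ln c ->
  cosh A = c ^ 2 * cosh_scaled q (/ c) /\ sinh A = c ^ 2 * sinh_scaled q (/ c).
Proof.
  intros hc ->.
  assert (he : exp (q + 2 * ln c) = exp q * c ^ 2).
  { replace (2 * ln c) with (ln c + ln c) by ring.
    rewrite !exp_plus, exp_ln by exact hc; ring. }
  assert (hq := exp_pos q).
  unfold cosh, sinh, cosh_scaled, sinh_scaled; rewrite exp_Ropp, he, exp_Ropp.
  split; field; lra.
Qed.

Section Catenoid.
Variables l1 l2 : R.
Hypothesis hl : 0 < l2 <= l1.

Lemma Bf_bounds y : l2 ^ 2 <= Bf l1 l2 y <= l1 ^ 2.
Proof.
  unfold Bf; assert (h := sin2_cos2 y); unfold Rsqr in h.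
  assert (0 <= cos y ^ 2) by apply pow2_ge_0; assert (0 <= sin y ^ 2) by apply pow2_ge_0.
  assert (l2 ^ 2 <= l1 ^ 2) by nra; nra.
Qed.

Lemma Bf_pos y : 0 < Bf l1 l2 y.
Proof. assert (h := Bf_bounds y); nra. Qed.

Lemma Rabs_phi_rhs_sub_le c th y : 0 < c ->
  c * Rabs (phi_rhs l1 l2 c th y - c) <= 2 * Rabs (cos th) * l1 ^ 2 + l1 ^ 4 / c ^ 2.
Proof.
  intros hc; unfold phi_rhs.
  set (B := Bf l1 l2 y); assert (hB := Bf_bounds y); fold B in hB.
  set (D := Dc c th); assert (hD := Dc_sqr_le c th hc); fold D in hD.
  replace (c ^ 2 + 2 * cos th * B - D ^ 2 * B ^ 2)
    with (c ^ 2 + (2 * cos th * B - D ^ 2 * B ^ 2)) by ring.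
  eapply Rle_trans; [apply Rabs_sqrt_sqr_plus_sub; exact hc |].
  eapply Rle_trans; [apply Rabs_triang |].
  rewrite Rabs_Ropp, (Rabs_pos_eq (D ^ 2 * B ^ 2)) by (apply Rmult_le_pos; apply pow2_ge_0).
  rewrite !Rabs_mult, (Rabs_pos_eq 2), (Rabs_pos_eq B) by nra.
  assert (hc2 : 0 < c ^ 2) by nra.
  assert (hD2 : D ^ 2 <= / c ^ 2).
  { apply (Rmult_le_reg_l (c ^ 2)); [exact hc2 | rewrite Rinv_r by lra; lra]. }
  assert (hB2 : B ^ 2 <= l1 ^ 4).
  { replace (l1 ^ 4) with ((l1 ^ 2) ^ 2) by ring; apply pow_incr; nra. }
  assert (0 <= D ^ 2) by apply pow2_ge_0; assert (0 <= B ^ 2) by apply pow2_ge_0.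
  assert (0 <= Rabs (cos th)) by apply Rabs_pos.
  unfold Rdiv; assert (0 < / c ^ 2) by (apply Rinv_0_lt_compat; exact hc2).
  nra.
Qed.

Lemma Rabs_phi_rhs_sub_le_div c th y : 1 <= c ->
  Rabs (phi_rhs l1 l2 c th y - c) <= (2 * l1 ^ 2 + l1 ^ 4) / c.
Proof.
  intros hc; assert (h := Rabs_phi_rhs_sub_le c th y ltac:(lra)).
  assert (Rabs (cos th) <= 1) by (apply Rabs_le, COS_bound).
  assert (0 <= l1 ^ 2) by (apply pow_le; lra); assert (0 <= l1 ^ 4) by (apply pow_le; lra).
  assert (1 <= c ^ 2) by nra.
  assert (l1 ^ 4 / c ^ 2 <= l1 ^ 4) by (apply Rle_div_l; nra).
  apply Rle_div_r; [lra | nra].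
Qed.

Lemma continuous_Gf_integrand c th (phi : R -> R) u : continuous phi u ->
  continuous (fun s => (c - phi_rhs l1 l2 c th (phi s)) / Bf l1 l2 (phi s)) u.
Proof.
  intros hphi.
  assert (hsmooth : forall g : R -> R, (forall y, ex_derive g y) ->
                    continuous (fun s => g (phi s)) u).
  { intros g hg; apply (continuous_comp phi g u hphi).
    apply (ex_derive_continuous (V := R_NormedModule)), hg. }
  apply (continuous_mult (fun s => c - phi_rhs l1 l2 c th (phi s)) (fun s => / Bf l1 l2 (phi s))).
  - apply (continuous_minus (fun _ => c)); [apply continuous_const |].
    apply continuous_sqrt_comp.
    apply (hsmooth (fun y => c ^ 2 + 2 * cos th * Bf l1 l2 y - Dc c th ^ 2 * Bf l1 l2 y ^ 2)).
    intros y; unfold Bf; auto_derive; auto.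
  - apply continuous_Rinv_comp; [| apply Rgt_not_eq, Bf_pos].
    apply (hsmooth (Bf l1 l2)); intros y; unfold Bf; auto_derive; auto.
Qed.

Lemma is_derive_Gf c th (phi : R -> R) : (forall u, ex_derive phi u) ->
  forall u, is_derive (Gf l1 l2 c th phi) u
              ((c - phi_rhs l1 l2 c th (phi u)) / Bf l1 l2 (phi u)).
Proof.
  intros hphi u.
  assert (hcont := fun s => continuous_Gf_integrand c th phi s
                              (ex_derive_continuous phi s (hphi s))).
  apply (is_derive_RInt (fun s => (c - phi_rhs l1 l2 c th (phi s)) / Bf l1 l2 (phi s))
           (Gf l1 l2 c th phi) 0 u); [| apply hcont].
  apply filter_forall; intros b; apply (RInt_correct (V := R_CompleteNormedModule)).
  apply ex_RInt_continuous; intros; apply hcont.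
Qed.

Lemma Gf_0 c th phi : Gf l1 l2 c th phi 0 = 0.
Proof. exact (RInt_point 0 _). Qed.

Section FixedC.
Variables (c th : R) (phi f : R -> R) (U : R).
Hypotheses (hc : 1 <= c) (hdata : catenoid_data l1 l2 c th phi f U).

Lemma cos_theta_pos : 0 < cos th.
Proof.
  destruct hdata as (hth0 & hth1 & _); apply cos_gt_0; assert (h := PI_RGT_0); lra.
Qed.

Lemma cos_theta_le : 2 * cos th * c ^ 2 <= 3 * l1 ^ 2 + l1 ^ 6.
Proof.
  destruct hdata as (_ & _ & _ & hphi & _ & hf & hf0 & hU & _ & hH).
  apply Rnot_lt_le; intros hk.
  set (D := Dc c th); set (H := fun u => D * f u + c * Gf l1 l2 c th phi u).
  set (dH := fun u => D * (D * Bf l1 l2 (phi u))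
                      + c * ((c - phi_rhs l1 l2 c th (phi u)) / Bf l1 l2 (phi u))).
  assert (hdH : forall u, is_derive H u (dH u)).
  { intros u; apply (is_derive_plus (fun u => D * f u) (fun u => c * Gf l1 l2 c th phi u));
      apply is_derive_scal; [apply hf |].
    apply is_derive_Gf; intros s; eexists; apply hphi. }
  assert (hdH_neg : forall u, dH u < 0).
  { intros u; assert (hB := Bf_bounds (phi u)); assert (hB0 := Bf_pos (phi u)).
    apply (Hf_derivative_lt_0 c D _ (l1 ^ 2) (cos th)); [lra | apply Dc_sqr_le; lra | lra |].
    replace ((l1 ^ 2) ^ 3) with (l1 ^ 6) by ring; lra. }
  assert (hdecr : - H 0 < - H U).
  { apply (incr_function (fun u => - H u) m_infty p_infty (fun u => - dH u)); try easy.
    - intros u _ _; apply (is_derive_opp H), hdH.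
    - intros u _ _; specialize (hdH_neg u); lra. }
  unfold H in hdecr; rewrite hf0, Gf_0 in hdecr; unfold Hf in hH; fold D in hH; lra.
Qed.

Lemma Rabs_sin_theta_sub_1_le : Rabs (sin th - 1) <= (3 * l1 ^ 2 + l1 ^ 6) / c.
Proof.
  assert (hcos := cos_theta_pos); assert (hle := cos_theta_le).
  destruct hdata as (hth0 & hth1 & _).
  assert (hsin : 0 < sin th) by (apply sin_gt_0; assert (h := PI_RGT_0); lra).
  assert (hs := SIN_bound th); assert (hcs := COS_bound th).
  assert (h2 := sin2_cos2 th); unfold Rsqr in h2.
  assert (h1 : 1 - sin th <= cos th) by nra.
  rewrite Rabs_left1 by lra; apply Rle_div_r; [lra |].
  assert (c <= c ^ 2) by nra; nra.
Qed.

Lemma Rabs_phi_sub_le ut : Rabs (phi (ut / c) - ut) <= (2 * l1 ^ 2 + l1 ^ 4) * Rabs ut / c.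
Proof.
  destruct hdata as (_ & _ & _ & hphi & hphi0 & _).
  replace (phi (ut / c) - ut) with ((phi (ut / c) - c * (ut / c)) - (phi 0 - c * 0))
    by (rewrite hphi0; field; lra).
  apply (Rabs_sub_at_div_le (fun y => phi y - c * y) (fun y => phi_rhs l1 l2 c th (phi y) - c));
    [lra | | |].
  - assert (0 <= l1 ^ 2) by (apply pow_le; lra); assert (0 <= l1 ^ 4) by (apply pow_le; lra).
    lra.
  - intros y; apply (is_derive_minus phi (fun y => c * y)); [apply hphi |].
    auto_derive; auto; ring.
  - intros y; apply Rabs_phi_rhs_sub_le_div; lra.
Qed.

Lemma Rabs_f_le ut : Rabs (f (ut / c)) <= l1 ^ 2 * Rabs ut / c.
Proof.
  destruct hdata as (_ & _ & _ & _ & _ & hf & hf0 & _).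
  rewrite <- (Rminus_0_r (f _)), <- hf0.
  apply (Rabs_sub_at_div_le _ _ _ _ _ hc (pow2_ge_0 l1) hf); intros y.
  assert (hD := Rabs_Dc_le c th ltac:(lra)); assert (hB := Bf_bounds (phi y)).
  rewrite Rabs_mult, (Rabs_pos_eq (Bf _ _ _)) by nra.
  unfold Rdiv; assert (0 <= Rabs (Dc c th)) by apply Rabs_pos; nra.
Qed.

Lemma Rabs_Gf_le ut :
  Rabs (Gf l1 l2 c th phi (ut / c)) <= (2 * l1 ^ 2 + l1 ^ 4) / l2 ^ 2 * Rabs ut / c.
Proof.
  destruct hdata as (_ & _ & _ & hphi & _).
  rewrite <- (Rminus_0_r (Gf _ _ _ _ _ _)), <- (Gf_0 c th phi) at 1.
  assert (hl2 : 0 < l2 ^ 2) by nra.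
  apply (Rabs_sub_at_div_le _
           (fun y => (c - phi_rhs l1 l2 c th (phi y)) / Bf l1 l2 (phi y)) _ _ _ hc).
  - apply Rmult_le_pos; [| apply Rlt_le, Rinv_0_lt_compat, hl2].
    assert (0 <= l1 ^ 2) by (apply pow_le; lra); assert (0 <= l1 ^ 4) by (apply pow_le; lra).
    lra.
  - apply is_derive_Gf; intros u; eexists; apply hphi.
  - intros y; assert (hr := Rabs_phi_rhs_sub_le_div c th (phi y) hc).
    assert (hB := Bf_bounds (phi y)).
    unfold Rdiv at 1; rewrite Rabs_mult, Rabs_inv, (Rabs_pos_eq (Bf _ _ _)) by nra.
    rewrite <- Rabs_Ropp, Ropp_minus_distr.
    replace ((2 * l1 ^ 2 + l1 ^ 4) / l2 ^ 2 / c) with ((2 * l1 ^ 2 + l1 ^ 4) / c * / l2 ^ 2)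
      by (field; lra).
    apply Rmult_le_compat; [apply Rabs_pos | apply Rlt_le, Rinv_0_lt_compat; nra | exact hr |].
    apply Rinv_le_contravar; lra.
Qed.

Lemma Rabs_Dc_mul_vc_le vt : Rabs (Dc c th * ((2 * ln c + vt) / c)) <= (2 + Rabs vt) / c.
Proof.
  assert (hD := Rabs_Dc_le c th ltac:(lra)).
  assert (hln := ln_lt_id c ltac:(lra)).
  assert (hln0 : 0 <= ln c) by (rewrite <- ln_1; apply ln_le; lra).
  assert (hi : 0 < / c <= 1).
  { split; [apply Rinv_0_lt_compat; lra | rewrite <- Rinv_1; apply Rinv_le_contravar; lra]. }
  assert (hv : Rabs (2 * ln c + vt) <= 2 * c + Rabs vt).
  { eapply Rle_trans; [apply Rabs_triang |].
    rewrite Rabs_mult, (Rabs_pos_eq 2), (Rabs_pos_eq (ln c)); lra. }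
  unfold Rdiv; rewrite !Rabs_mult, (Rabs_pos_eq (/ c)) by lra.
  assert (hvt := Rabs_pos vt); assert (hD0 := Rabs_pos (Dc c th)).
  assert (Rabs (Dc c th) * (Rabs (2 * ln c + vt) * / c) <= / c * ((2 * c + Rabs vt) * / c))
    by (apply Rmult_le_compat; [lra | assert (h := Rabs_pos (2 * ln c + vt)); nra | lra | nra]).
  replace (/ c * ((2 * c + Rabs vt) * / c)) with ((2 + Rabs vt * / c) * / c) in * by (field; lra).
  eapply Rle_trans; [eassumption |]; apply Rmult_le_compat_r; nra.
Qed.

Lemma Rabs_X3_le ut vt :
  Rabs (X3 l1 l2 c th phi (ut / c) ((2 * ln c + vt) / c))
  <= l1 * l2 * (2 + Rabs vt + (2 * l1 ^ 2 + l1 ^ 4) / l2 ^ 2 * Rabs ut) / c.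
Proof.
  assert (hG := Rabs_Gf_le ut); assert (hDv := Rabs_Dc_mul_vc_le vt).
  unfold X3.
  replace (- l1 * l2 * Dc c th * ((2 * ln c + vt) / c) + l1 * l2 * Gf l1 l2 c th phi (ut / c))
    with (l1 * l2 * (- (Dc c th * ((2 * ln c + vt) / c)) + Gf l1 l2 c th phi (ut / c)))
    by ring.
  assert (hpos : 0 < l1 * l2) by nra.
  rewrite Rabs_mult, (Rabs_pos_eq (l1 * l2)) by lra.
  eapply Rle_trans.
  { apply Rmult_le_compat_l; [lra |]; eapply Rle_trans; [apply Rabs_triang |].
    rewrite Rabs_Ropp; apply Rplus_le_compat; [exact hDv | exact hG]. }
  apply Req_le; field; lra.
Qed.

Lemma Rabs_c_mul_sub_phi_rhs_le y :
  Rabs (c * (c - phi_rhs l1 l2 c th y)) <= ((3 * l1 ^ 2 + l1 ^ 6) * l1 ^ 2 + l1 ^ 4) / c.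
Proof.
  assert (hcos := cos_theta_pos); assert (hle := cos_theta_le).
  assert (h := Rabs_phi_rhs_sub_le c th y ltac:(lra)).
  rewrite (Rabs_pos_eq (cos th)) in h by lra.
  rewrite Rabs_mult, (Rabs_pos_eq c), <- Rabs_Ropp, Ropp_minus_distr by lra.
  eapply Rle_trans; [exact h |].
  assert (hc2 : 0 < c ^ 2) by nra.
  apply (Rmult_le_reg_r (c ^ 2)); [exact hc2 |].
  replace ((2 * cos th * l1 ^ 2 + l1 ^ 4 / c ^ 2) * c ^ 2)
    with ((2 * cos th * c ^ 2) * l1 ^ 2 + l1 ^ 4) by (field; lra).
  replace (((3 * l1 ^ 2 + l1 ^ 6) * l1 ^ 2 + l1 ^ 4) / c * c ^ 2)
    with (((3 * l1 ^ 2 + l1 ^ 6) * l1 ^ 2 + l1 ^ 4) * c) by (field; lra).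
  assert (0 <= l1 ^ 2) by (apply pow_le; lra); assert (0 <= l1 ^ 4) by (apply pow_le; lra).
  assert (0 <= l1 ^ 6) by (apply pow_le; lra).
  assert (2 * cos th * c ^ 2 * l1 ^ 2 <= (3 * l1 ^ 2 + l1 ^ 6) * l1 ^ 2)
    by (apply Rmult_le_compat_r; lra).
  nra.
Qed.

End FixedC.

Definition M1_scaled s x q ic :=
  cos x * cosh_scaled q ic - l1 * l2 * s * ic ^ 2 * sin x * sinh_scaled q ic.
Definition M2_scaled s x q ic :=
  cos x * sinh_scaled q ic - l1 * l2 * s * ic ^ 2 * sin x * cosh_scaled q ic.
Definition M3_scaled s x q ic :=
  sin x * sinh_scaled q ic + l1 * l2 * s * ic ^ 2 * cos x * cosh_scaled q ic.
Definition M4_scaled s x q ic :=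
  sin x * cosh_scaled q ic + l1 * l2 * s * ic ^ 2 * cos x * sinh_scaled q ic.

Definition X1_scaled s p x w q ic :=
  let B := Bf l1 l2 p in
  - / ((1 + l1 ^ 2 * l2 ^ 2 * s ^ 2 * ic ^ 4) * B) *
    ( / l1 * s * B * cos p * M1_scaled s x q ic
    - / l1 * w * sin p * M2_scaled s x q ic
    - / l2 * w * cos p * M3_scaled s x q ic
    - / l2 * s * B * sin p * M4_scaled s x q ic).

Definition X2_scaled s p x w q ic :=
  let B := Bf l1 l2 p in
  - / ((1 + l1 ^ 2 * l2 ^ 2 * s ^ 2 * ic ^ 4) * B) *
    ( / l1 * s * B * cos p * M4_scaled s x q ic
    - / l1 * w * sin p * M3_scaled s x q ic
    + / l2 * w * cos p * M2_scaled s x q ic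
    + / l2 * s * B * sin p * M1_scaled s x q ic).

Section Rescaling.
Variables (c th : R) (phi f : R -> R) (u v q : R).
Hypotheses (hc : 0 < c) (hA : Af c f u v = q + 2 * ln c).

Let x3 := X3 l1 l2 c th phi u v.

Lemma M_eq_scaled :
  M1 l1 l2 c th phi f u v = c ^ 3 * M1_scaled (sin th) x3 q (/ c) /\
  M2 l1 l2 c th phi f u v = c ^ 3 * M2_scaled (sin th) x3 q (/ c) /\
  M3 l1 l2 c th phi f u v = c ^ 3 * M3_scaled (sin th) x3 q (/ c) /\
  M4 l1 l2 c th phi f u v = c ^ 3 * M4_scaled (sin th) x3 q (/ c).
Proof.
  destruct (cosh_sinh_scaled c _ q hc hA) as [hch hsh].
  unfold M1, M2, M3, M4, M1_scaled, M2_scaled, M3_scaled, M4_scaled, Dc; cbv zeta.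
  rewrite hch, hsh; fold x3; repeat split; field; lra.
Qed.

Lemma X1_eq_scaled :
  X1 l1 l2 c th phi f u v
  = X1_scaled (sin th) (phi u) x3 (c * (c - phi_rhs l1 l2 c th (phi u))) q (/ c).
Proof.
  destruct M_eq_scaled as (e1 & e2 & e3 & e4).
  unfold X1, X1_scaled; cbv zeta; rewrite e1, e2, e3, e4; unfold Dc.
  assert (hB := Bf_pos (phi u)).
  assert (0 <= (l1 * l2 * sin th) ^ 2) by apply pow2_ge_0.
  assert (0 < c ^ 4) by (apply pow_lt; lra).
  field; repeat split; try lra; nra.
Qed.

Lemma X2_eq_scaled :
  X2 l1 l2 c th phi f u v
  = X2_scaled (sin th) (phi u) x3 (c * (c - phi_rhs l1 l2 c th (phi u))) q (/ c).
Proof.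
  destruct M_eq_scaled as (e1 & e2 & e3 & e4).
  unfold X2, X2_scaled; cbv zeta; rewrite e1, e2, e3, e4; unfold Dc.
  assert (hB := Bf_pos (phi u)).
  assert (0 <= (l1 * l2 * sin th) ^ 2) by apply pow2_ge_0.
  assert (0 < c ^ 4) by (apply pow_lt; lra).
  field; repeat split; try lra; nra.
Qed.

End Rescaling.

Lemma is_lim_X_scaled (a : Rbar) (s p x w q ic : R -> R) (ut vt : R) :
  is_lim s a 1 -> is_lim p a ut -> is_lim x a 0 -> is_lim w a 0 -> is_lim q a vt ->
  is_lim ic a 0 ->
  is_lim (fun y => X1_scaled (s y) (p y) (x y) (w y) (q y) (ic y)) a
    (- / (2 * l1) * cos ut * exp vt) /\
  is_lim (fun y => X2_scaled (s y) (p y) (x y) (w y) (q y) (ic y)) a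
    (- / (2 * l2) * sin ut * exp vt).
Proof.
  intros hs hp hx hw hq hic; assert (hB := Bf_pos ut); unfold Bf in hB.
  unfold X1_scaled, X2_scaled, M1_scaled, M2_scaled, M3_scaled, M4_scaled,
    cosh_scaled, sinh_scaled, Bf; cbv zeta.
  split; eapply is_lim_Finite_eq; is_lim_rules.
  all: try (rewrite cos_0, sin_0; simpl; field; lra).
  all: apply Rgt_not_eq; simpl in hB |- *; nra.
Qed.

Section Family.
Variables (th : R -> R) (phi f : R -> R -> R) (U : R -> R).
Hypothesis hdata : forall c, 0 < c -> catenoid_data l1 l2 c (th c) (phi c) (f c) (U c).
Variables ut vt : R.

Lemma is_lim_sin_theta : is_lim (fun c => sin (th c)) p_infty 1.
Proof.
  apply (is_lim_p_infty_of_Rabs_le_div _ _ (3 * l1 ^ 2 + l1 ^ 6)); intros c hc.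
  exact (Rabs_sin_theta_sub_1_le c _ _ _ _ hc (hdata c ltac:(lra))).
Qed.

Lemma is_lim_phi_uc : is_lim (fun c => phi c (ut / c)) p_infty ut.
Proof.
  apply (is_lim_p_infty_of_Rabs_le_div _ _ ((2 * l1 ^ 2 + l1 ^ 4) * Rabs ut)); intros c hc.
  exact (Rabs_phi_sub_le c _ _ _ _ hc (hdata c ltac:(lra)) ut).
Qed.

Lemma is_lim_f_uc_plus : is_lim (fun c => f c (ut / c) + vt) p_infty vt.
Proof.
  apply (is_lim_p_infty_of_Rabs_le_div _ _ (l1 ^ 2 * Rabs ut)); intros c hc.
  replace (f c (ut / c) + vt - vt) with (f c (ut / c)) by ring.
  exact (Rabs_f_le c _ _ _ _ hc (hdata c ltac:(lra)) ut).
Qed.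

Lemma is_lim_c_mul_sub_phi_rhs :
  is_lim (fun c => c * (c - phi_rhs l1 l2 c (th c) (phi c (ut / c)))) p_infty 0.
Proof.
  apply (is_lim_p_infty_of_Rabs_le_div _ _ ((3 * l1 ^ 2 + l1 ^ 6) * l1 ^ 2 + l1 ^ 4)).
  intros c hc; rewrite Rminus_0_r.
  exact (Rabs_c_mul_sub_phi_rhs_le c _ _ _ _ hc (hdata c ltac:(lra)) _).
Qed.

Lemma is_lim_X3_uc_vc :
  is_lim (fun c => X3 l1 l2 c (th c) (phi c) (ut / c) ((2 * ln c + vt) / c)) p_infty 0.
Proof.
  apply (is_lim_p_infty_of_Rabs_le_div _ _
           (l1 * l2 * (2 + Rabs vt + (2 * l1 ^ 2 + l1 ^ 4) / l2 ^ 2 * Rabs ut))).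
  intros c hc; rewrite Rminus_0_r.
  exact (Rabs_X3_le c _ _ _ _ hc (hdata c ltac:(lra)) ut vt).
Qed.

Lemma is_lim_X1_X2_uc_vc :
  is_lim (fun c => X1 l1 l2 c (th c) (phi c) (f c) (ut / c) ((2 * ln c + vt) / c)) p_infty
    (- / (2 * l1) * cos ut * exp vt) /\
  is_lim (fun c => X2 l1 l2 c (th c) (phi c) (f c) (ut / c) ((2 * ln c + vt) / c)) p_infty
    (- / (2 * l2) * sin ut * exp vt).
Proof.
  destruct (is_lim_X_scaled p_infty _ _ _ _ _ _ ut vt is_lim_sin_theta is_lim_phi_uc
              is_lim_X3_uc_vc is_lim_c_mul_sub_phi_rhs is_lim_f_uc_plus is_lim_inv_p_infty)
    as [h1 h2].
  assert (hA : forall c, 1 <= c ->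
            Af c (f c) (ut / c) ((2 * ln c + vt) / c) = (f c (ut / c) + vt) + 2 * ln c).
  { intros c hc; unfold Af; field; lra. }
  split; (eapply is_lim_ext_loc; [exists 1; intros c hc | eassumption]).
  - symmetry; apply X1_eq_scaled; [lra | apply hA; lra].
  - symmetry; apply X2_eq_scaled; [lra | apply hA; lra].
Qed.

End Family.

End Catenoid.

Theorem proposition6p1 (l1 l2 : R)
  (hl : (l1 > l2 /\ l2 > 0) \/ (l1 = 1 /\ l2 = 1))
  (th : R -> R) (phi f : R -> R -> R) (U : R -> R)
  (hdata : forall c, 0 < c -> catenoid_data l1 l2 c (th c) (phi c) (f c) (U c))
  (ut vt : R) :
  let uc := fun c => ut / c in
  let vc := fun c => (2 * ln c + vt) / c in
  is_lim (fun c => X1 l1 l2 c (th c) (phi c) (f c) (uc c) (vc c)) p_infty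
    (- / (2 * l1) * cos ut * exp vt) /\
  is_lim (fun c => X2 l1 l2 c (th c) (phi c) (f c) (uc c) (vc c)) p_infty
    (- / (2 * l2) * sin ut * exp vt) /\
  is_lim (fun c => X3 l1 l2 c (th c) (phi c) (uc c) (vc c)) p_infty 0.
Proof.
  intros uc vc.
  assert (hl' : 0 < l2 <= l1) by (destruct hl; lra).
  destruct (is_lim_X1_X2_uc_vc l1 l2 hl' th phi f U hdata ut vt) as [h1 h2].
  exact (conj h1 (conj h2 (is_lim_X3_uc_vc l1 l2 hl' th phi f U hdata ut vt))).
Qed.
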